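(* Let $J\subset\mathbb{R}\setminus\{0\}$ be compact and $f\in C([0,1])$ (complex valued). Define $\psi:[0,1)\times J\to\mathbb{C}$ by \[ \psi(y,\alpha):=\frac{e^{i\varphi(y,\alpha)}}{1-y}\int_y^1e^{-i\varphi(x,\alpha)}f(x)dx. \] Then $\psi$ extends to a continuous function on $[0,1]\times J$.
   Context: For $\alpha\in\mathbb{R}\setminus\{0\}$ and $y\in(-1,1)$, $\varphi(y,\alpha):=-\frac{2\alpha}{(1-y)^2}+\frac{2\alpha}{1-y}-\frac{2}{\alpha}\log(1-y)$. *)

From Stdlib Require Import Reals.
From Coquelicot Require Import Coquelicot.
Open Scope R_scope.

Definition phi (y alpha : R) : R :=
  - (2 * alpha) / (1 - y) ^ 2 + (2 * alpha) / (1 - y) - (2 / alpha) * ln (1 - y).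

Definition Cexpi (theta : R) : C := (cos theta, sin theta).

Definition psi (f : R -> C) (y alpha : R) : C :=
  Cmult (Cmult (Cexpi (phi y alpha)) (RtoC (/ (1 - y))))
        (RInt (V := C_R_CompleteNormedModule)
              (fun x => Cmult (Cexpi (- phi x alpha)) (f x)) y 1).

From Stdlib Require Import Reals Lra Lia.
From Coquelicot Require Import Coquelicot.
Open Scope R_scope.

(* For y < 1, psi is the continuous factor e^{i phi(y,a)} / (1 - y) times the tail
   integral T(y,a) = int_y^1 e^{-i phi(x,a)} f(x) dx.  T is Lipschitz in y because its
   integrand is bounded, and continuous in a because on [y, c] the phase is Lipschitz
   in a while int_c^1 is O(1 - c); hence T, and psi, are jointly continuous.

   At y = 1 the extension is 0.  Write f = f(1) + (f - f(1)): the second part contributes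
   at most sup_[y,1] |f - f(1)| to psi.  For the constant part, phi' ~ -4a/(1-x)^3, so
   integrating by parts against i e^{-i phi} / phi', with 1/phi' replaced by its leading
   term -(1-x)^3/(4a), gives int_y^1 e^{-i phi} = O((1-y)^2) uniformly for a near a0;
   divided by 1 - y this tends to 0.

   The integrand has no limit at x = 1, so its Riemann integrability on [y, 1] is derived
   from its boundedness and its integrability on every [y, c], c < 1. *)

Notation RInt_C := (@RInt C_R_CompleteNormedModule).
Notation ex_RInt_C := (@ex_RInt C_R_NormedModule).

Lemma mult_lt_of_le_div d e M : 0 <= M -> 0 < e -> d <= e / (M + 1) -> d * M < e.
Proof.
  intros HM he hd. apply Rmult_le_compat_r with (r := M + 1) in hd; [| lra].
  replace (e / (M + 1) * (M + 1)) with e in hd by (field; lra).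
  destruct (Rle_lt_dec d 0); nra.
Qed.

Definition glue (c : R) (f1 f2 : R -> R) (t : R) : R :=
  if Rle_dec t c then f1 t else f2 t.

Lemma adapted_couple_ext (f g : R -> R) a b l lf :
  a <= b -> (forall x, a <= x <= b -> f x = g x) ->
  adapted_couple f a b l lf -> adapted_couple g a b l lf.
Proof.
  intros hab Hfg [Hord [H0 [H1 [Hlen Hconst]]]].
  repeat split; auto.
  intros i Hi x Hx.
  rewrite Rmin_left in H0 by lra. rewrite Rmax_right in H1 by lra.
  assert (RList.pos_Rl l 0 <= RList.pos_Rl l i)
    by (apply (proj1 (RList.RList_P6 l) Hord); lia).
  assert (RList.pos_Rl l (S i) <= RList.pos_Rl l (pred (length l)))
    by (apply (proj1 (RList.RList_P6 l) Hord); lia).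
  unfold open_interval in Hx.
  rewrite <- Hfg by lra. exact (Hconst i Hi x Hx).
Qed.

Lemma IsStepFun_glue_l a c (s : StepFun a c) f : a <= c -> IsStepFun (glue c s f) a c.
Proof.
  intros hac. exists (subdivision s), (subdivision_val s).
  apply adapted_couple_ext with (f := s); [exact hac | | apply StepFun_P1].
  intros x Hx. unfold glue. destruct (Rle_dec x c); [reflexivity | lra].
Defined.

Lemma IsStepFun_glue_r c b f v : c <= b -> IsStepFun (glue c f (fct_cte v)) c b.
Proof.
  intros hcb. exists (cons c (cons b nil)), (cons v nil).
  destruct (StepFun_P3 v hcb) as [Hord [H0 [H1 [Hlen Hconst]]]].
  repeat split; auto.
  intros i Hi x Hx. simpl in Hi. assert (i = 0%nat) by lia. subst i.
  simpl in Hx. unfold open_interval in Hx. unfold glue, fct_cte. simpl.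
  destruct (Rle_dec x c); [lra | reflexivity].
Defined.

Lemma RiemannInt_SF_glue_l a c (s : StepFun a c) f (h : a <= c) :
  RiemannInt_SF (mkStepFun (IsStepFun_glue_l a c s f h)) = RiemannInt_SF s.
Proof. reflexivity. Qed.

Lemma RiemannInt_SF_glue_r c b f v (h : c <= b) :
  RiemannInt_SF (mkStepFun (IsStepFun_glue_r c b f v h)) = v * (b - c).
Proof. unfold RiemannInt_SF. simpl. destruct (Rle_dec c b); [ring | lra]. Qed.

Lemma Riemann_integrable_bounded_tail (g : R -> R) a b M : a < b ->
  (forall x, a <= x <= b -> Rabs (g x) <= M) ->
  (forall c, a <= c < b -> Riemann_integrable g a c) ->
  Riemann_integrable g a b.
Proof.
  intros hab HM Hint eps.
  assert (HM0 : 0 <= M) by (specialize (HM a); pose proof (Rabs_pos (g a)); lra).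
  pose proof (cond_pos eps) as heps.
  set (d := Rmin (eps / 2 / (M + 1)) ((b - a) / 2)).
  assert (hd : 0 < d) by (apply Rmin_glb_lt; repeat apply Rdiv_lt_0_compat; lra).
  assert (hdba : d <= (b - a) / 2) by apply Rmin_r.
  assert (hdM : d * M < eps / 2) by (apply mult_lt_of_le_div; [lra | lra | apply Rmin_l]).
  set (c := b - d).
  assert (hac : a <= c) by (unfold c; lra).
  assert (hcb : c <= b) by (unfold c; lra).
  assert (he2 : 0 < eps / 2) by lra.
  destruct (Hint c ltac:(unfold c; lra) (mkposreal _ he2)) as [phi1 [psi1 [Happ Hsmall]]].
  pose (Pphi := StepFun_P46 (IsStepFun_glue_l a c phi1 (fct_cte 0) hac)
                            (IsStepFun_glue_r c b phi1 0 hcb)).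
  pose (Ppsi_l := IsStepFun_glue_l a c psi1 (fct_cte M) hac).
  pose (Ppsi_r := IsStepFun_glue_r c b psi1 M hcb).
  pose (Ppsi := StepFun_P46 Ppsi_l Ppsi_r).
  exists (mkStepFun Pphi), (mkStepFun Ppsi). split.
  - intros t Ht. rewrite Rmin_left in Ht by lra. rewrite Rmax_right in Ht by lra.
    simpl. unfold glue.
    destruct (Rle_dec t c).
    + apply Happ. rewrite Rmin_left by lra. rewrite Rmax_right by lra. lra.
    + unfold fct_cte. rewrite Rminus_0_r. apply HM. lra.
  - rewrite <- (StepFun_P43 Ppsi_l Ppsi_r Ppsi).
    unfold Ppsi_l, Ppsi_r. rewrite RiemannInt_SF_glue_l, RiemannInt_SF_glue_r.
    simpl in Hsmall.
    replace (b - c) with d in * by (unfold c; ring).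
    assert (0 <= M * d) by (apply Rmult_le_pos; lra).
    apply Rabs_def1; apply Rabs_def2 in Hsmall; lra.
Qed.

Lemma ex_RInt_bounded_tail (g : R -> R) a b M : a < b ->
  (forall x, a <= x <= b -> Rabs (g x) <= M) ->
  (forall c, a <= c < b -> ex_RInt g a c) ->
  ex_RInt g a b.
Proof.
  intros hab HM Hint. apply ex_RInt_Reals_1, Riemann_integrable_bounded_tail with M; auto.
  intros c Hc. apply ex_RInt_Reals_0, Hint, Hc.
Qed.

Lemma ex_RInt_C_bounded_tail (G : R -> C) a b M : a < b ->
  (forall x, a <= x <= b -> Cmod (G x) <= M) ->
  (forall c, a <= c < b -> ex_RInt_C G a c) ->
  ex_RInt_C G a b.
Proof.
  intros hab HM Hint.
  apply (ex_RInt_fct_extend_pair (U := R_NormedModule) (V := R_NormedModule));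
    apply ex_RInt_bounded_tail with M; try exact hab.
  - intros x Hx. eapply Rle_trans; [| apply HM, Hx].
    eapply Rle_trans; [apply Rmax_l | apply Rmax_Cmod].
  - intros c Hc. exact (ex_RInt_fct_extend_fst (U := R_NormedModule) (V := R_NormedModule) _ _ _ (Hint c Hc)).
  - intros x Hx. eapply Rle_trans; [| apply HM, Hx].
    eapply Rle_trans; [apply Rmax_r | apply Rmax_Cmod].
  - intros c Hc. exact (ex_RInt_fct_extend_snd (U := R_NormedModule) (V := R_NormedModule) _ _ _ (Hint c Hc)).
Qed.

Lemma Rabs_RInt_le_approx_primitive (g U dU : R -> R) a b E : a <= b ->
  (forall x, a <= x <= b -> is_derive U x (dU x)) ->
  (forall x, a <= x <= b -> continuous dU x) ->
  ex_RInt g a b ->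
  (forall x, a <= x <= b -> Rabs (g x - dU x) <= E) ->
  Rabs (RInt g a b) <= Rabs (U b - U a) + (b - a) * E.
Proof.
  intros hab HU HdU Hg HE.
  assert (HI : is_RInt dU a b (U b - U a)).
  { apply (is_RInt_derive (V := R_CompleteNormedModule));
      intros x Hx; rewrite Rmin_left, Rmax_right in Hx by lra; auto. }
  pose proof (is_RInt_minus _ _ _ _ _ _ (RInt_correct _ _ _ Hg) HI) as Hdiff.
  pose proof (norm_RInt_le_const (V := R_NormedModule) _ _ _ _ E hab HE Hdiff) as Hb.
  change (Rabs (RInt g a b - (U b - U a)) <= (b - a) * E) in Hb.
  replace (RInt g a b) with ((U b - U a) + (RInt g a b - (U b - U a))) by ring.
  eapply Rle_trans; [apply Rabs_triang | lra].
Qed.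

Lemma Rabs_RInt_le_of_truncations (g : R -> R) a b K M : a < b -> ex_RInt g a b ->
  (forall x, a <= x <= b -> Rabs (g x) <= M) ->
  (forall c, a <= c < b -> Rabs (RInt g a c) <= K) ->
  Rabs (RInt g a b) <= K.
Proof.
  intros hab Hg HM HK.
  assert (HM0 : 0 <= M) by (specialize (HM a); pose proof (Rabs_pos (g a)); lra).
  apply Rle_plus_epsilon. intros e he.
  set (d := Rmin ((b - a) / 2) (e / (M + 1))).
  assert (hd : 0 < d) by (apply Rmin_glb_lt; apply Rdiv_lt_0_compat; lra).
  assert (hdba : d <= (b - a) / 2) by apply Rmin_l.
  assert (hdM : d * M < e) by (apply mult_lt_of_le_div; [lra | lra | apply Rmin_r]).
  rewrite <- (RInt_Chasles (V := R_CompleteNormedModule) g a (b - d) b).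
  2: { apply ex_RInt_Chasles_1 with b; [lra | exact Hg]. }
  2: { apply ex_RInt_Chasles_2 with a; [lra | exact Hg]. }
  assert (Htail : Rabs (RInt g (b - d) b) <= (b - (b - d)) * M).
  { apply (norm_RInt_le_const (V := R_NormedModule) g); [lra | intros x Hx; apply HM; lra |].
    apply (RInt_correct (V := R_CompleteNormedModule)), ex_RInt_Chasles_2 with a; [lra | exact Hg]. }
  pose proof (HK (b - d) ltac:(lra)).
  eapply Rle_trans; [apply Rabs_triang|]. change (plus _ _) with (RInt g a (b - d) + RInt g (b - d) b).
  lra.
Qed.

Lemma Rabs_lin_cos_sin_le A B t : Rabs (A * cos t + B * sin t) <= Rabs A + Rabs B.
Proof.
  pose proof (SIN_bound t). pose proof (COS_bound t).
  assert (Rabs (sin t) <= 1) by (apply Rabs_le; lra).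
  assert (Rabs (cos t) <= 1) by (apply Rabs_le; lra).
  eapply Rle_trans; [apply Rabs_triang|]. rewrite !Rabs_mult.
  pose proof (Rabs_pos A). pose proof (Rabs_pos B). nra.
Qed.

Lemma Rabs_lin_sin_cos_le A B t : Rabs (A * sin t - B * cos t) <= Rabs A + Rabs B.
Proof.
  replace (A * sin t - B * cos t) with (- B * cos t + A * sin t) by ring.
  rewrite (Rplus_comm (Rabs A)), <- (Rabs_Ropp B). apply Rabs_lin_cos_sin_le.
Qed.

Lemma Cmod_le_Rabs_re_im (z : C) : Cmod z <= Rabs (fst z) + Rabs (snd z).
Proof.
  destruct z as [x y]. unfold Cmod. simpl.
  pose proof (Rabs_pos x). pose proof (Rabs_pos y).
  rewrite <- (sqrt_Rsqr (Rabs x + Rabs y)) by lra.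
  apply sqrt_le_1_alt. unfold Rsqr.
  replace (x * (x * 1) + y * (y * 1)) with (Rabs x ^ 2 + Rabs y ^ 2) by (rewrite !pow2_abs; ring).
  nra.
Qed.

Lemma Cmod_Cexpi t : Cmod (Cexpi t) = 1.
Proof.
  unfold Cexpi, Cmod. simpl. rewrite <- sqrt_1 at 3. f_equal.
  pose proof (sin2_cos2 t) as H. unfold Rsqr in H. lra.
Qed.

Lemma Rabs_cos_sub_le u v : Rabs (cos u - cos v) <= Rabs (u - v).
Proof.
  destruct (MVT_abs cos (fun x => - sin x) v u) as [c [Hc _]].
  { intros c _. apply derivable_pt_lim_cos. }
  rewrite Hc, Rabs_Ropp. pose proof (SIN_bound c).
  assert (Rabs (sin c) <= 1) by (apply Rabs_le; lra).
  pose proof (Rabs_pos (u - v)). nra.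
Qed.

Lemma Rabs_sin_sub_le u v : Rabs (sin u - sin v) <= Rabs (u - v).
Proof.
  destruct (MVT_abs sin cos v u) as [c [Hc _]].
  { intros c _. apply derivable_pt_lim_sin. }
  rewrite Hc. pose proof (COS_bound c).
  assert (Rabs (cos c) <= 1) by (apply Rabs_le; lra).
  pose proof (Rabs_pos (u - v)). nra.
Qed.

Lemma Cmod_Cexpi_sub_le u v : Cmod (Cminus (Cexpi u) (Cexpi v)) <= 2 * Rabs (u - v).
Proof.
  eapply Rle_trans; [apply Cmod_le_Rabs_re_im|]. simpl.
  pose proof (Rabs_cos_sub_le u v). pose proof (Rabs_sin_sub_le u v).
  unfold Rminus in *. lra.
Qed.

Lemma continuous_Cexpi t : continuous Cexpi t.
Proof.
  apply filterlim_locally. intros eps.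
  generalize (filter_and _ _ (proj1 (filterlim_locally _ _) (continuous_cos t) eps)
                             (proj1 (filterlim_locally _ _) (continuous_sin t) eps)).
  apply filter_imp. intros u Hu. exact Hu.
Qed.

Lemma continuous_RtoC {U : UniformSpace} (f : U -> R) x :
  continuous f x -> continuous (fun t => RtoC (f t)) x.
Proof.
  intros Hf. apply filterlim_locally. intros eps.
  generalize (proj1 (filterlim_locally _ _) Hf eps).
  apply filter_imp. intros u Hu. split; [exact Hu | apply ball_center].
Qed.

Lemma continuous_Cmult {U : UniformSpace} (f g : U -> C) x :
  continuous f x -> continuous g x -> continuous (fun t => Cmult (f t) (g t)) x.
Proof.
  intros Hf Hg P HP. apply locally_C in HP.
  apply (continuous_mult (K := C_AbsRing) f g x); [| |exact HP];
    intros Q HQ; apply Hf || apply Hg; apply locally_C, HQ.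
Qed.

Lemma Cmod_RInt_le_const_abs (G : R -> C) a b M : ex_RInt_C G a b ->
  (forall x, Rmin a b <= x <= Rmax a b -> Cmod (G x) <= M) ->
  Cmod (RInt_C G a b) <= Rabs (b - a) * M.
Proof.
  intros HG HM. rewrite Cmod_norm.
  apply (norm_RInt_le_const_abs (V := prod_NormedModule _ R_NormedModule R_NormedModule) G).
  - intros x Hx. rewrite <- Cmod_norm. auto.
  - exact (RInt_correct (V := C_R_CompleteNormedModule) _ _ _ HG).
Qed.

Lemma Cmod_RInt_le_re_im (G : R -> C) a b : ex_RInt_C G a b ->
  Cmod (RInt_C G a b) <=
  Rabs (RInt (fun x => fst (G x)) a b) + Rabs (RInt (fun x => snd (G x)) a b).
Proof.
  intros HG. pose proof (RInt_correct (V := C_R_CompleteNormedModule) _ _ _ HG) as HI.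
  rewrite (is_RInt_unique (fun x => fst (G x)) a b _
             (is_RInt_fct_extend_fst (U := R_NormedModule) (V := R_NormedModule) _ _ _ _ HI)).
  rewrite (is_RInt_unique (fun x => snd (G x)) a b _
             (is_RInt_fct_extend_snd (U := R_NormedModule) (V := R_NormedModule) _ _ _ _ HI)).
  apply Cmod_le_Rabs_re_im.
Qed.

Lemma continuous_uncurry_of_lipschitz {V : NormedModule R_AbsRing} (g : R -> R -> V) y0 a0 L :
  locally y0 (fun y => forall a, norm (minus (g y a) (g y0 a)) <= L * Rabs (y - y0)) ->
  continuous (g y0) a0 ->
  continuous (fun z : R * R => g (fst z) (snd z)) (y0, a0).
Proof.
  intros [d Hlip] Hcont.
  apply filterlim_locally_ball_norm. intros eps.
  pose proof (cond_pos eps) as heps.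
  pose proof (Rabs_pos L) as hL.
  destruct (proj1 (filterlim_locally_ball_norm _ _) Hcont (pos_div_2 eps)) as [d' Ha].
  assert (hd : 0 < Rmin d (Rmin d' (eps / 2 / (Rabs L + 1)))).
  { repeat apply Rmin_glb_lt; try apply cond_pos. apply Rdiv_lt_0_compat; lra. }
  exists (mkposreal _ hd). intros [y a] [Hy Ha']. simpl in Hy, Ha' |- *.
  assert (Hyd : ball y0 d y) by (eapply ball_le; [apply Rmin_l | exact Hy]).
  assert (Had : ball a0 d' a)
    by (eapply ball_le; [eapply Rle_trans; [apply Rmin_r | apply Rmin_l] | exact Ha']).
  assert (Hys : Rabs (y - y0) * Rabs L < eps / 2).
  { apply mult_lt_of_le_div; [exact hL | lra |].
    apply Rlt_le, Rlt_le_trans with (Rmin d (Rmin d' (eps / 2 / (Rabs L + 1)))); [exact Hy |].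
    eapply Rle_trans; apply Rmin_r. }
  replace (pos eps) with (eps / 2 + eps / 2) by (simpl; field).
  apply ball_norm_triangle with (g y0 a); [exact (Ha a Had) |].
  unfold ball_norm. eapply Rle_lt_trans; [exact (Hlip y Hyd a)|].
  apply Rle_lt_trans with (Rabs (y - y0) * Rabs L); [| exact Hys].
  rewrite Rmult_comm. apply Rmult_le_compat_l; [apply Rabs_pos | apply Rle_abs].
Qed.

Lemma continuous_phi_l a x : x < 1 -> continuous (fun t => phi t a) x.
Proof.
  intros hx. apply (ex_derive_continuous (K := R_AbsRing) (V := R_NormedModule)).
  unfold phi. auto_derive. repeat split; try lra; intro; nra.
Qed.

Lemma is_derive_phi_l a x : a <> 0 -> x < 1 ->
  is_derive (fun t => phi t a) x (- 4 * a / (1 - x) ^ 3 + 2 * a / (1 - x) ^ 2 + 2 / (a * (1 - x))).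
Proof.
  intros ha hx. unfold phi. auto_derive.
  - repeat split; try lra; intro; nra.
  - field. split; [lra | exact ha].
Qed.

Lemma continuous_phi y a : y < 1 -> a <> 0 ->
  continuous (fun z : R * R => phi (fst z) (snd z)) (y, a).
Proof.
  intros hy ha. apply (continuity_2d_pt_filterlim (fun u v => phi u v)).
  assert (Hs : continuity_2d_pt (fun u _ => 1 - u) y a).
  { apply continuity_2d_pt_minus; [apply continuity_2d_pt_const | apply continuity_2d_pt_id1]. }
  assert (Hln : continuity_2d_pt (fun u _ => ln (1 - u)) y a).
  { apply (continuity_2d_pt_filterlim (fun u _ => ln (1 - u))).
    apply (continuous_comp (fun z : R * R => 1 - fst z) ln).
    - exact (proj1 (continuity_2d_pt_filterlim _ _ _) Hs).
    - apply continuous_ln. simpl. lra. }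
  unfold phi, Rdiv. cbn [pow]. unfold Rminus in *.
  repeat first
    [ exact Hln | exact Hs | apply continuity_2d_pt_plus | apply continuity_2d_pt_opp
    | apply continuity_2d_pt_mult | apply continuity_2d_pt_inv | apply continuity_2d_pt_const
    | apply continuity_2d_pt_id2 ]; simpl; nra.
Qed.

Lemma Rabs_inv_le_of_near a a0 : a0 <> 0 -> Rabs (a - a0) < Rabs a0 / 2 ->
  a <> 0 /\ / Rabs a <= 2 / Rabs a0.
Proof.
  intros h0 h. pose proof (Rabs_pos_lt a0 h0).
  assert (Rabs a0 / 2 <= Rabs a).
  { pose proof (Rabs_triang_inv a0 a). rewrite Rabs_minus_sym in h. lra. }
  split; [intros ->; rewrite Rabs_R0 in *; lra |].
  replace (2 / Rabs a0) with (/ (Rabs a0 / 2)) by (field; lra).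
  apply Rinv_le_contravar; lra.
Qed.

Lemma Rabs_phi_sub_param_le a a0 Q x c :
  a <> 0 -> a0 <> 0 -> / Rabs a <= Q -> / Rabs a0 <= Q -> 0 <= x <= c -> c < 1 ->
  Rabs (phi x a - phi x a0) <= Rabs (a - a0) * (2 / (1 - c) ^ 2 + 2 * Q ^ 2 * - ln (1 - c)).
Proof.
  intros ha ha0 hQ hQ0 hx hc. unfold phi.
  set (t := 1 - x). assert (ht : 1 - c <= t <= 1) by (unfold t; lra). clearbody t.
  replace (- (2 * a) / t ^ 2 + 2 * a / t - 2 / a * ln t - (- (2 * a0) / t ^ 2 + 2 * a0 / t - 2 / a0 * ln t))
    with ((a - a0) * (2 * (t - 1) / t ^ 2) + (a - a0) * (2 / (a * a0) * ln t))
    by (field; repeat split; auto; lra).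
  eapply Rle_trans; [apply Rabs_triang|]. rewrite !Rabs_mult, <- Rmult_plus_distr_l.
  apply Rmult_le_compat_l; [apply Rabs_pos|].
  assert (H1 : Rabs (2 * (t - 1) / t ^ 2) <= 2 / (1 - c) ^ 2).
  { assert (0 < (1 - c) ^ 2) by (apply pow_lt; lra).
    assert ((1 - c) ^ 2 <= t ^ 2) by (apply pow_incr; lra).
    rewrite Rabs_div, Rabs_mult, Rabs_right, Rabs_left1, <- RPow_abs, Rabs_right by
      (try apply pow_nonzero; lra).
    unfold Rdiv. apply Rmult_le_compat; try lra.
    - apply Rlt_le, Rinv_0_lt_compat. lra.
    - apply Rinv_le_contravar; lra. }
  assert (H2 : Rabs (2 / (a * a0)) <= 2 * Q ^ 2).
  { unfold Rdiv. rewrite Rinv_mult, !Rabs_mult, Rabs_right, !Rabs_inv by lra.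
    pose proof (Rinv_0_lt_compat _ (Rabs_pos_lt a ha)).
    pose proof (Rinv_0_lt_compat _ (Rabs_pos_lt a0 ha0)).
    replace (2 * Q ^ 2) with (2 * (Q * Q)) by ring.
    apply Rmult_le_compat_l; [lra|]. apply Rmult_le_compat; lra. }
  assert (H3 : Rabs (ln t) <= - ln (1 - c)).
  { rewrite Rabs_left1.
    - apply Ropp_le_contravar, ln_le; lra.
    - rewrite <- ln_1. apply ln_le; lra. }
  pose proof (Rabs_pos (ln t)). pose proof (Rabs_pos (2 / (a * a0))).
  assert (Rabs (2 / (a * a0)) * Rabs (ln t) <= 2 * Q ^ 2 * - ln (1 - c))
    by (apply Rmult_le_compat; auto).
  lra.
Qed.

Definition osc (A B a x : R) : R := A * cos (phi x a) + B * sin (phi x a).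

(* [osc A B a] is Re((A - iB) e^{i phi}); [osc_primitive] is the real part of
   u (A - iB) e^{i phi} / i, where u = -(1-x)^3/(4a) is the leading term of 1/phi'. *)
Definition osc_primitive (A B a x : R) : R :=
  - (1 - x) ^ 3 / (4 * a) * (A * sin (phi x a) - B * cos (phi x a)).

Definition osc_primitive_deriv (A B a x : R) : R :=
  (1 - (1 - x) / 2 - (1 - x) ^ 2 / (2 * a ^ 2)) * osc A B a x
  + 3 * (1 - x) ^ 2 / (4 * a) * (A * sin (phi x a) - B * cos (phi x a)).

Lemma is_derive_osc_primitive A B a x : a <> 0 -> x < 1 ->
  is_derive (osc_primitive A B a) x (osc_primitive_deriv A B a x).
Proof.
  intros ha hx. set (p := fun t => phi t a).
  apply is_derive_ext
    with (f := fun t => - (1 - t) ^ 3 / (4 * a) * (A * sin (p t) - B * cos (p t))); [reflexivity|].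
  pose proof (is_derive_phi_l a x ha hx) as Hp.
  auto_derive.
  - repeat split; eexists; exact Hp.
  - rewrite (is_derive_unique (fun t : R => p t) x _ Hp). unfold osc_primitive_deriv, osc. fold (p x).
    field. split; [exact ha | lra].
Qed.

Lemma continuous_osc_primitive_deriv A B a x : a <> 0 -> x < 1 ->
  continuous (osc_primitive_deriv A B a) x.
Proof.
  intros ha hx. apply (ex_derive_continuous (K := R_AbsRing) (V := R_NormedModule)).
  unfold osc_primitive_deriv, osc, phi. auto_derive. repeat split; try lra; intro; nra.
Qed.

Lemma Rabs_osc_sub_primitive_deriv_le A B a Q y x : a <> 0 -> / Rabs a <= Q ->
  0 <= y <= x -> x < 1 ->
  Rabs (osc A B a x - osc_primitive_deriv A B a x) <= (Rabs A + Rabs B) * (1 - y) * (1 + Q) ^ 2 / 2.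
Proof.
  intros ha hQ hy hx. unfold osc_primitive_deriv.
  set (S := Rabs A + Rabs B). set (t := 1 - x). set (q := / Rabs a).
  assert (hq : 0 < q <= Q) by (split; [apply Rinv_0_lt_compat, Rabs_pos_lt, ha | exact hQ]).
  assert (Hw : Rabs (osc A B a x) <= S) by apply Rabs_lin_cos_sin_le.
  assert (Hv : Rabs (A * sin (phi x a) - B * cos (phi x a)) <= S) by apply Rabs_lin_sin_cos_le.
  assert (E1 : t ^ 2 / (2 * a ^ 2) = t ^ 2 / 2 * q ^ 2).
  { unfold q. rewrite <- (pow2_abs a). field. apply Rabs_no_R0, ha. }
  assert (E2 : Rabs (3 * t ^ 2 / (4 * a)) = 3 * t ^ 2 / 4 * q).
  { unfold q. rewrite Rabs_div, !Rabs_mult, (Rabs_right 3), (Rabs_right 4), (Rabs_right (t ^ 2))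
      by (try apply Rle_ge, pow2_ge_0; lra).
    field. apply Rabs_no_R0, ha. }
  replace ((1 - t / 2 - t ^ 2 / (2 * a ^ 2)) * osc A B a x) with
    (osc A B a x - (t / 2 + t ^ 2 / (2 * a ^ 2)) * osc A B a x) by ring.
  rewrite E1.
  match goal with |- Rabs (?w - (?w - ?u + ?v)) <= _ => replace (w - (w - u + v)) with (u - v) by ring end.
  eapply Rle_trans; [apply Rabs_triang|]. rewrite Rabs_Ropp, !Rabs_mult, E2.
  assert (ht : 0 < t <= 1 - y) by (unfold t; lra).
  assert (Hc : 0 <= t / 2 + t ^ 2 / 2 * q ^ 2) by (pose proof (pow2_ge_0 t); pose proof (pow2_ge_0 q); nra).
  rewrite (Rabs_right (t / 2 + t ^ 2 / 2 * q ^ 2)) by lra.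
  pose proof (Rabs_pos (osc A B a x)). pose proof (Rabs_pos (A * sin (phi x a) - B * cos (phi x a))).
  assert (Ht2 : 0 <= t ^ 2 <= 1 - y) by (simpl; nra).
  assert (q ^ 2 <= Q ^ 2) by (apply pow_incr; lra).
  assert (t ^ 2 * q ^ 2 <= (1 - y) * Q ^ 2)
    by (apply Rmult_le_compat; try apply pow2_ge_0; lra).
  assert (t ^ 2 * q <= (1 - y) * Q) by (apply Rmult_le_compat; lra).
  assert (Hb : t / 2 + t ^ 2 / 2 * q ^ 2 + 3 * t ^ 2 / 4 * q <= (1 - y) * (1 + Q) ^ 2 / 2)
    by (assert (0 <= (1 - y) * Q) by nra; simpl in *; nra).
  assert (0 <= 3 * t ^ 2 / 4 * q) by (pose proof (pow2_ge_0 t); nra).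
  apply Rle_trans with ((t / 2 + t ^ 2 / 2 * q ^ 2 + 3 * t ^ 2 / 4 * q) * S); [nra|].
  assert (0 <= S) by lra. nra.
Qed.

Lemma Rabs_osc_primitive_le A B a Q y x : a <> 0 -> / Rabs a <= Q -> 0 <= y <= x -> x <= 1 ->
  Rabs (osc_primitive A B a x) <= (Rabs A + Rabs B) * (1 - y) ^ 2 * Q / 4.
Proof.
  intros ha hQ hy hx. unfold osc_primitive.
  pose proof (Rabs_lin_sin_cos_le A B (phi x a)) as Hv.
  set (t := 1 - x). assert (ht : 0 <= t <= 1 - y) by (unfold t; lra).
  assert (Hu : Rabs (- t ^ 3 / (4 * a)) = t ^ 3 / 4 * / Rabs a).
  { rewrite Rabs_div, Rabs_Ropp, Rabs_mult, (Rabs_right 4), (Rabs_right (t ^ 3))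
      by (try apply Rle_ge, pow_le; lra).
    field. apply Rabs_no_R0, ha. }
  assert (t ^ 3 <= (1 - y) ^ 2) by (simpl; nra).
  assert (0 <= / Rabs a) by (apply Rlt_le, Rinv_0_lt_compat, Rabs_pos_lt, ha).
  assert (0 <= t ^ 3) by (apply pow_le; lra).
  rewrite Rabs_mult, Hu.
  assert (t ^ 3 * / Rabs a <= (1 - y) ^ 2 * Q) by (apply Rmult_le_compat; lra).
  pose proof (Rabs_pos (A * sin (phi x a) - B * cos (phi x a))).
  pose proof (pow2_ge_0 (1 - y)).
  assert (0 <= (1 - y) ^ 2 * Q) by (apply Rmult_le_pos; lra).
  apply Rle_trans with ((1 - y) ^ 2 * Q / 4 * Rabs (A * sin (phi x a) - B * cos (phi x a))); nra.
Qed.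

Lemma ex_RInt_osc A B a y c : y <= c < 1 -> ex_RInt (osc A B a) y c.
Proof.
  intros hyc. apply (ex_RInt_continuous (V := R_CompleteNormedModule)).
  intros x Hx. rewrite Rmin_left, Rmax_right in Hx by lra.
  apply (ex_derive_continuous (K := R_AbsRing) (V := R_NormedModule)).
  unfold osc, phi. auto_derive. repeat split; try lra; intro; nra.
Qed.

Lemma ex_RInt_osc_1 A B a y : y < 1 -> ex_RInt (osc A B a) y 1.
Proof.
  intros hy. apply ex_RInt_bounded_tail with (Rabs A + Rabs B); [exact hy | |].
  - intros x _. apply Rabs_lin_cos_sin_le.
  - intros c Hc. apply ex_RInt_osc. exact Hc.
Qed.

Lemma Rabs_RInt_osc_le A B a Q y : a <> 0 -> / Rabs a <= Q -> 0 <= y < 1 ->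
  Rabs (RInt (osc A B a) y 1) <= (Rabs A + Rabs B) * (1 - y) ^ 2 * (1 + Q) ^ 2.
Proof.
  intros ha hQ hy.
  apply Rabs_RInt_le_of_truncations with (Rabs A + Rabs B);
    [lra | apply ex_RInt_osc_1; lra | intros x _; apply Rabs_lin_cos_sin_le |].
  intros c Hc.
  eapply Rle_trans.
  { apply Rabs_RInt_le_approx_primitive
      with (U := osc_primitive A B a) (dU := osc_primitive_deriv A B a)
           (E := (Rabs A + Rabs B) * (1 - y) * (1 + Q) ^ 2 / 2); [lra | | | apply ex_RInt_osc; lra |].
    - intros x Hx. apply is_derive_osc_primitive; [exact ha | lra].
    - intros x Hx. apply continuous_osc_primitive_deriv; [exact ha | lra].
    - intros x Hx. apply Rabs_osc_sub_primitive_deriv_le; auto; lra. }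
  pose proof (Rabs_osc_primitive_le A B a Q y c ha hQ ltac:(lra) ltac:(lra)).
  pose proof (Rabs_osc_primitive_le A B a Q y y ha hQ ltac:(lra) ltac:(lra)).
  assert (HQ : 0 <= Q) by (eapply Rle_trans; [|exact hQ]; apply Rlt_le, Rinv_0_lt_compat, Rabs_pos_lt, ha).
  assert (HS : 0 <= Rabs A + Rabs B) by (pose proof (Rabs_pos A); pose proof (Rabs_pos B); lra).
  set (S := Rabs A + Rabs B) in *.
  assert (Rabs (osc_primitive A B a c - osc_primitive A B a y) <= S * (1 - y) ^ 2 * Q / 2).
  { unfold Rminus at 1. eapply Rle_trans; [apply Rabs_triang|]. rewrite Rabs_Ropp. lra. }
  assert (0 <= S * (1 - y)) by (apply Rmult_le_pos; lra).
  assert ((c - y) * (S * (1 - y) * (1 + Q) ^ 2 / 2) <= S * (1 - y) ^ 2 * (1 + Q) ^ 2 / 2).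
  { assert (0 <= S * (1 - y) * (1 + Q) ^ 2 / 2) by (pose proof (pow2_ge_0 (1 + Q)); nra).
    simpl; nra. }
  assert (S * (1 - y) ^ 2 * Q <= S * (1 - y) ^ 2 * (1 + Q) ^ 2).
  { apply Rmult_le_compat_l; [apply Rmult_le_pos; [lra | apply pow2_ge_0] | simpl; nra]. }
  lra.
Qed.

Definition kernel (w : R -> C) (a x : R) : C := Cmult (Cexpi (- phi x a)) (w x).

Definition tail (w : R -> C) (y a : R) : C := RInt_C (kernel w a) y 1.

Lemma Cmod_kernel w a x : Cmod (kernel w a x) = Cmod (w x).
Proof. unfold kernel. rewrite Cmod_mult, Cmod_Cexpi. ring. Qed.

Lemma ex_RInt_kernel w a u v : (forall x, continuous w x) -> u < 1 -> v < 1 ->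
  ex_RInt_C (kernel w a) u v.
Proof.
  intros Hw hu hv. apply (ex_RInt_continuous (V := C_R_CompleteNormedModule)). intros x Hx.
  assert (hx : x < 1) by (pose proof (Rmax_lub_lt u v 1 hu hv); lra).
  apply continuous_Cmult; [|apply Hw].
  apply (continuous_comp (fun t => - phi t a) Cexpi); [|apply continuous_Cexpi].
  apply (continuous_opp (V := R_NormedModule)), continuous_phi_l, hx.
Qed.

Lemma ex_RInt_kernel_1 w M a y : (forall x, continuous w x) ->
  (forall x, y <= x <= 1 -> Cmod (w x) <= M) -> y < 1 ->
  ex_RInt_C (kernel w a) y 1.
Proof.
  intros Hw HM hy. apply ex_RInt_C_bounded_tail with M; [exact hy | |].
  - intros x Hx. rewrite Cmod_kernel. auto.
  - intros c Hc. apply ex_RInt_kernel; [exact Hw | lra | lra].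
Qed.

Lemma Cmod_tail_const p q a Q y : a <> 0 -> / Rabs a <= Q -> 0 <= y < 1 ->
  Cmod (tail (fun _ => (p, q)) y a) <= 2 * (Rabs p + Rabs q) * (1 - y) ^ 2 * (1 + Q) ^ 2.
Proof.
  intros ha hQ hy. unfold tail.
  eapply Rle_trans.
  { apply Cmod_RInt_le_re_im, ex_RInt_kernel_1 with (Cmod (p, q)); [| intros; lra | lra].
    intros x. apply continuous_const. }
  rewrite (RInt_ext (fun x => fst (kernel (fun _ => (p, q)) a x)) (osc p q a))
    by (intros x _; unfold kernel, osc, Cexpi; simpl; rewrite cos_neg, sin_neg; ring).
  rewrite (RInt_ext (fun x => snd (kernel (fun _ => (p, q)) a x)) (osc q (- p) a))
    by (intros x _; unfold kernel, osc, Cexpi; simpl; rewrite cos_neg, sin_neg; ring).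
  pose proof (Rabs_RInt_osc_le p q a Q y ha hQ hy).
  pose proof (Rabs_RInt_osc_le q (- p) a Q y ha hQ hy).
  rewrite Rabs_Ropp in *. lra.
Qed.

Section Tail.

Variables (w : R -> C) (M : R).
Hypothesis w_cont : forall x, continuous w x.
Hypothesis w_bound : forall x, Cmod (w x) <= M.

Lemma tail_Chasles y c a : y < 1 -> c < 1 ->
  tail w y a = Cplus (RInt_C (kernel w a) y c) (tail w c a).
Proof.
  intros hy hc. unfold tail. symmetry.
  apply (RInt_Chasles (V := C_R_CompleteNormedModule)).
  - apply ex_RInt_kernel; auto.
  - apply ex_RInt_kernel_1 with M; auto.
Qed.

Lemma Cmod_tail_sub_le u v a : u < 1 -> v < 1 ->
  Cmod (Cminus (tail w u a) (tail w v a)) <= M * Rabs (u - v).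
Proof.
  intros hu hv. rewrite (tail_Chasles u v a hu hv).
  assert (E : forall X Y : C, Cminus (Cplus X Y) Y = X) by (intros; ring). rewrite E.
  rewrite Rmult_comm, Rabs_minus_sym.
  apply Cmod_RInt_le_const_abs; [apply ex_RInt_kernel; auto |].
  intros x _. rewrite Cmod_kernel. apply w_bound.
Qed.

Lemma Cmod_tail_le y a : y < 1 -> Cmod (tail w y a) <= (1 - y) * M.
Proof.
  intros hy. rewrite <- (Rabs_right (1 - y)) by lra.
  apply Cmod_RInt_le_const_abs; [apply ex_RInt_kernel_1 with M; auto |].
  intros x _. rewrite Cmod_kernel. apply w_bound.
Qed.

Lemma Cmod_kernel_sub_le a a0 x :
  Cmod (Cminus (kernel w a x) (kernel w a0 x)) <= 2 * M * Rabs (phi x a - phi x a0).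
Proof.
  unfold kernel.
  replace (Cminus (Cmult (Cexpi (- phi x a)) (w x)) (Cmult (Cexpi (- phi x a0)) (w x)))
    with (Cmult (Cminus (Cexpi (- phi x a)) (Cexpi (- phi x a0))) (w x)) by ring.
  rewrite Cmod_mult.
  pose proof (Cmod_Cexpi_sub_le (- phi x a) (- phi x a0)) as H.
  replace (- phi x a - - phi x a0) with (- (phi x a - phi x a0)) in H by ring.
  rewrite Rabs_Ropp in H.
  pose proof (w_bound x). pose proof (Cmod_ge_0 (w x)).
  pose proof (Cmod_ge_0 (Cminus (Cexpi (- phi x a)) (Cexpi (- phi x a0)))).
  pose proof (Rabs_pos (phi x a - phi x a0)). nra.
Qed.

Lemma Cmod_tail_sub_param_le y0 c a a0 E : y0 <= c < 1 ->
  (forall x, y0 <= x <= c -> Cmod (Cminus (kernel w a x) (kernel w a0 x)) <= E) ->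
  Cmod (Cminus (tail w y0 a) (tail w y0 a0)) <= (c - y0) * E + 2 * (1 - c) * M.
Proof.
  intros hc HE.
  rewrite (tail_Chasles y0 c a), (tail_Chasles y0 c a0) by lra.
  assert (Eq : forall X Y X' Y' : C,
             Cminus (Cplus X Y) (Cplus X' Y') = Cplus (Cminus X X') (Cminus Y Y'))
    by (intros; ring).
  rewrite Eq. eapply Rle_trans; [apply Cmod_triangle | apply Rplus_le_compat].
  - replace (Cminus (RInt_C (kernel w a) y0 c) (RInt_C (kernel w a0) y0 c))
      with (RInt_C (fun x => Cminus (kernel w a x) (kernel w a0 x)) y0 c).
    2: { apply (RInt_minus (V := C_R_CompleteNormedModule)); apply ex_RInt_kernel; auto; lra. }
    rewrite <- (Rabs_right (c - y0)) by lra.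
    apply Cmod_RInt_le_const_abs.
    + apply (ex_RInt_minus (V := C_R_NormedModule)); apply ex_RInt_kernel; auto; lra.
    + intros x Hx. rewrite Rmin_left, Rmax_right in Hx by lra. auto.
  - unfold Cminus. eapply Rle_trans; [apply Cmod_triangle |]. rewrite Cmod_opp.
    pose proof (Cmod_tail_le c a (proj2 hc)). pose proof (Cmod_tail_le c a0 (proj2 hc)). lra.
Qed.

Lemma continuous_tail_param y0 a0 : 0 <= y0 < 1 -> a0 <> 0 -> continuous (tail w y0) a0.
Proof.
  intros hy0 ha0.
  apply (proj2 (filterlim_locally_ball_norm (K := R_AbsRing) (U := C_R_NormedModule) _ _)).
  intros eps. pose proof (cond_pos eps) as heps.
  assert (HM : 0 <= M) by (pose proof (w_bound 0); pose proof (Cmod_ge_0 (w 0)); lra).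
  pose proof (Rabs_pos_lt a0 ha0) as Ha0.
  set (d := Rmin ((1 - y0) / 2) (eps / 4 / (M + 1))).
  assert (hd : 0 < d) by (apply Rmin_glb_lt; repeat apply Rdiv_lt_0_compat; lra).
  assert (hdy : d <= (1 - y0) / 2) by apply Rmin_l.
  assert (hdM : d * M < eps / 4) by (apply mult_lt_of_le_div; [lra | lra | apply Rmin_r]).
  set (c := 1 - d). set (Q := 2 / Rabs a0).
  set (L := 2 / (1 - c) ^ 2 + 2 * Q ^ 2 * - ln (1 - c)).
  assert (HL : 0 <= L).
  { assert (ln (1 - c) <= 0) by (rewrite <- ln_1; apply ln_le; unfold c; lra).
    assert (0 < 2 / (1 - c) ^ 2) by (apply Rdiv_lt_0_compat; [lra | apply pow_lt; unfold c; lra]).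
    pose proof (pow2_ge_0 Q). unfold L. nra. }
  assert (HML : 0 <= 2 * M * L) by (repeat apply Rmult_le_pos; lra).
  set (delta := Rmin (Rabs a0 / 2) (eps / 4 / (2 * M * L + 1))).
  assert (hdelta : 0 < delta) by (apply Rmin_glb_lt; repeat apply Rdiv_lt_0_compat; lra).
  exists (mkposreal _ hdelta). intros a Ha. change (Rabs (a - a0) < delta) in Ha.
  destruct (Rabs_inv_le_of_near a a0 ha0) as [ha hQ].
  { eapply Rlt_le_trans; [exact Ha | apply Rmin_l]. }
  fold Q in hQ.
  assert (hQ0 : / Rabs a0 <= Q) by (unfold Q, Rdiv; pose proof (Rinv_0_lt_compat _ Ha0); lra).
  assert (Hdelta : Rabs (a - a0) * (2 * M * L) < eps / 4).
  { apply mult_lt_of_le_div; [exact HML | lra |].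
    apply Rlt_le, Rlt_le_trans with (1 := Ha), Rmin_r. }
  unfold ball_norm. rewrite <- Cmod_norm.
  eapply Rle_lt_trans.
  { apply (Cmod_tail_sub_param_le y0 c a a0 (2 * M * L * Rabs (a - a0))); [unfold c; lra |].
    intros x Hx. eapply Rle_trans; [apply Cmod_kernel_sub_le |].
    replace (2 * M * L * Rabs (a - a0)) with (2 * M * (Rabs (a - a0) * L)) by ring.
    apply Rmult_le_compat_l; [lra |].
    apply Rabs_phi_sub_param_le; auto; unfold c in *; lra. }
  assert (0 <= c - y0 <= 1) by (unfold c; lra).
  assert (0 <= 2 * M * L * Rabs (a - a0)) by (apply Rmult_le_pos; [lra | apply Rabs_pos]).
  replace (1 - c) with d by (unfold c; ring).
  nra.
Qed.

Lemma continuous_tail y0 a0 : 0 <= y0 < 1 -> a0 <> 0 ->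
  continuous (fun z : R * R => tail w (fst z) (snd z)) (y0, a0).
Proof.
  intros hy0 ha0.
  apply (continuous_uncurry_of_lipschitz (V := C_R_NormedModule) (tail w) y0 a0 M).
  - assert (h : 0 < 1 - y0) by lra.
    exists (mkposreal _ h). intros y Hy a. change (Rabs (y - y0) < 1 - y0) in Hy.
    rewrite <- Cmod_norm. apply Cmod_tail_sub_le; [apply Rabs_def2 in Hy |]; lra.
  - apply continuous_tail_param; assumption.
Qed.

Lemma continuous_psi y0 a0 : 0 <= y0 < 1 -> a0 <> 0 ->
  continuous (fun z : R * R => psi w (fst z) (snd z)) (y0, a0).
Proof.
  intros hy0 ha0. apply continuous_Cmult; [apply continuous_Cmult |].
  - apply (continuous_comp (fun z : R * R => phi (fst z) (snd z)) Cexpi).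
    + apply continuous_phi; lra.
    + apply continuous_Cexpi.
  - apply continuous_RtoC, (continuous_comp fst (fun y => / (1 - y))); [apply continuous_fst |].
    apply (ex_derive_continuous (K := R_AbsRing) (V := R_NormedModule)).
    auto_derive. simpl. lra.
  - exact (continuous_tail y0 a0 hy0 ha0).
Qed.

End Tail.

Lemma Cmod_psi_le_near_one w a Q y eta : (forall x, continuous w x) ->
  a <> 0 -> / Rabs a <= Q -> 0 <= y < 1 ->
  (forall x, y <= x <= 1 -> Cmod (Cminus (w x) (w 1)) <= eta) ->
  Cmod (psi w y a) <= 2 * (Rabs (fst (w 1)) + Rabs (snd (w 1))) * (1 + Q) ^ 2 * (1 - y) + eta.
Proof.
  intros Hw ha hQ hy Heta.
  destruct (w 1) as [p q].
  set (v := fun x => Cminus (w x) (p, q)).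
  assert (Hv : forall x, continuous v x).
  { intros x. apply (continuous_minus (V := C_R_NormedModule)); [apply Hw | apply continuous_const]. }
  assert (Hsplit : tail w y a = Cplus (tail (fun _ => (p, q)) y a) (tail v y a)).
  { unfold tail. rewrite <- (RInt_plus (V := C_R_CompleteNormedModule)).
    - apply (RInt_ext (V := C_R_CompleteNormedModule)). intros x _.
      change (kernel w a x = Cplus (kernel (fun _ => (p, q)) a x) (kernel v a x)).
      unfold kernel, v. ring.
    - apply ex_RInt_kernel_1 with (Cmod (p, q)); [intros; apply continuous_const | intros; lra | lra].
    - apply ex_RInt_kernel_1 with eta; [exact Hv | exact Heta | lra]. }
  assert (Hrest : Cmod (tail v y a) <= (1 - y) * eta).
  { rewrite <- (Rabs_right (1 - y)) by lra.
    apply Cmod_RInt_le_const_abs; [apply ex_RInt_kernel_1 with eta; auto; lra |].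
    intros x Hx. rewrite Cmod_kernel. apply Heta.
    rewrite Rmin_left, Rmax_right in Hx by lra. exact Hx. }
  pose proof (Cmod_tail_const p q a Q y ha hQ hy) as Hconst.
  change (psi w y a) with (Cmult (Cmult (Cexpi (phi y a)) (RtoC (/ (1 - y)))) (tail w y a)).
  rewrite !Cmod_mult, Cmod_Cexpi, Cmod_R, Rabs_right, Hsplit
    by (apply Rle_ge, Rlt_le, Rinv_0_lt_compat; lra).
  apply Rle_trans with (/ (1 - y) * (2 * (Rabs p + Rabs q) * (1 - y) ^ 2 * (1 + Q) ^ 2 + (1 - y) * eta)).
  - rewrite Rmult_1_l. apply Rmult_le_compat_l; [apply Rlt_le, Rinv_0_lt_compat; lra |].
    eapply Rle_trans; [apply Cmod_triangle | lra].
  - simpl fst; simpl snd. right. field. lra.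
Qed.

Definition psi_ext (w : R -> C) (y a : R) : C := if Rlt_dec y 1 then psi w y a else RtoC 0.

Lemma psi_ext_continuous_lt_1 w M y0 a0 : (forall x, continuous w x) ->
  (forall x, Cmod (w x) <= M) -> 0 <= y0 < 1 -> a0 <> 0 ->
  forall eps, 0 < eps -> exists delta, 0 < delta /\
    forall y a, Rabs (y - y0) < delta -> Rabs (a - a0) < delta ->
      Cmod (Cminus (psi_ext w y a) (psi_ext w y0 a0)) < eps.
Proof.
  intros Hw HM hy0 ha0 eps he.
  pose proof (continuous_psi w M Hw HM y0 a0 hy0 ha0) as Hc.
  assert (Hloc : locally (y0, a0) (fun z : R * R =>
    (fun y a => @ball_norm R_AbsRing C_R_NormedModule (psi w y0 a0) eps (psi w y a)) (fst z) (snd z))).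
  { exact (proj1 (filterlim_locally_ball_norm (K := R_AbsRing) (U := C_R_NormedModule) _ _)
             Hc (mkposreal eps he)). }
  apply locally_2d_locally in Hloc. destruct Hloc as [d Hd].
  exists (Rmin d (1 - y0)). split; [apply Rmin_glb_lt; [apply cond_pos | lra] |].
  intros y a Hy Ha. unfold psi_ext.
  destruct (Rlt_dec y0 1) as [_ | ]; [| lra].
  destruct (Rlt_dec y 1) as [_ | Hy1].
  - rewrite Cmod_norm. apply Hd; eapply Rlt_le_trans; eauto; apply Rmin_l.
  - pose proof (Rmin_r d (1 - y0)). apply Rabs_def2 in Hy. lra.
Qed.

Lemma psi_ext_continuous_at_1 w a0 : (forall x, continuous w x) -> a0 <> 0 ->
  forall eps, 0 < eps -> exists delta, 0 < delta /\
    forall y a, 0 <= y <= 1 -> Rabs (y - 1) < delta -> Rabs (a - a0) < delta ->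
      Cmod (Cminus (psi_ext w y a) (psi_ext w 1 a0)) < eps.
Proof.
  intros Hw ha0 eps he.
  set (Q := 2 / Rabs a0).
  set (K := 2 * (Rabs (fst (w 1)) + Rabs (snd (w 1))) * (1 + Q) ^ 2).
  assert (HK : 0 <= K).
  { pose proof (Rabs_pos (fst (w 1))). pose proof (Rabs_pos (snd (w 1))).
    pose proof (pow2_ge_0 (1 + Q)). unfold K. nra. }
  pose proof (Rabs_pos_lt a0 ha0) as Ha0.
  destruct (proj1 (filterlim_locally_ball_norm (K := R_AbsRing) (U := C_R_NormedModule) _ _)
              (Hw 1) (pos_div_2 (mkposreal eps he))) as [d Hd].
  set (delta := Rmin d (Rmin (Rabs a0 / 2) (eps / 2 / (K + 1)))).
  assert (hdelta : 0 < delta).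
  { repeat apply Rmin_glb_lt; try apply cond_pos; repeat apply Rdiv_lt_0_compat; lra. }
  exists delta. split; [exact hdelta |].
  intros y a hy Hy Ha. unfold psi_ext.
  assert (E : forall z : C, Cminus z (RtoC 0) = z) by (intros; ring).
  destruct (Rlt_dec 1 1) as [| _]; [lra |]. rewrite E.
  destruct (Rlt_dec y 1) as [hy1 | _]; [| rewrite Cmod_0; lra].
  rewrite Rabs_left1, Ropp_minus_distr in Hy by lra.
  destruct (Rabs_inv_le_of_near a a0 ha0) as [ha hQ].
  { eapply Rlt_le_trans; [exact Ha |]. eapply Rle_trans; apply Rmin_r || apply Rmin_l. }
  fold Q in hQ.
  eapply Rle_lt_trans.
  { apply (Cmod_psi_le_near_one w a Q y (eps / 2) Hw ha hQ ltac:(lra)).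
    intros x Hx. apply Rlt_le. rewrite Cmod_norm. apply Hd.
    change (Rabs (x - 1) < d). rewrite Rabs_left1 by lra.
    assert (delta <= d) by apply Rmin_l. lra. }
  fold K.
  assert ((1 - y) * K < eps / 2).
  { apply mult_lt_of_le_div; [exact HK | lra |].
    apply Rlt_le, Rlt_le_trans with (1 := Hy). eapply Rle_trans; apply Rmin_r. }
  lra.
Qed.

Lemma psi_ext_continuous w M y0 a0 : (forall x, continuous w x) ->
  (forall x, Cmod (w x) <= M) -> 0 <= y0 <= 1 -> a0 <> 0 ->
  forall eps, 0 < eps -> exists delta, 0 < delta /\
    forall y a, 0 <= y <= 1 -> Rabs (y - y0) < delta -> Rabs (a - a0) < delta ->
      Cmod (Cminus (psi_ext w y a) (psi_ext w y0 a0)) < eps.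
Proof.
  intros Hw HM hy0 ha0 eps he.
  destruct (Rlt_dec y0 1) as [hy1 | hy1].
  - destruct (psi_ext_continuous_lt_1 w M y0 a0 Hw HM (conj (proj1 hy0) hy1) ha0 eps he)
      as [delta [hdelta Hdelta]].
    exists delta. split; [exact hdelta |]. intros y a _. apply Hdelta.
  - replace y0 with 1 by lra. apply psi_ext_continuous_at_1; assumption.
Qed.

Definition clamp01 (x : R) : R := Rmax 0 (Rmin x 1).

Lemma clamp01_in x : 0 <= clamp01 x <= 1.
Proof. unfold clamp01, Rmax, Rmin. repeat destruct Rle_dec; lra. Qed.

Lemma clamp01_id x : 0 <= x <= 1 -> clamp01 x = x.
Proof. intros. unfold clamp01, Rmax, Rmin. repeat destruct Rle_dec; lra. Qed.

Lemma Rabs_clamp01_sub_le x y : Rabs (clamp01 x - clamp01 y) <= Rabs (x - y).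
Proof.
  unfold clamp01, Rmax, Rmin. repeat destruct Rle_dec; unfold Rabs; repeat destruct Rcase_abs; lra.
Qed.

Lemma continuous_clamp01_ext (f : R -> C) :
  (forall x, 0 <= x <= 1 ->
     filterlim f (within (fun t => 0 <= t <= 1) (locally x)) (locally (f x))) ->
  forall x, continuous (fun t => f (clamp01 t)) x.
Proof.
  intros Hf x.
  eapply filterlim_comp; [| apply (Hf (clamp01 x) (clamp01_in x))].
  intros P [eps HP]. exists eps. intros t Ht. apply HP; [| apply clamp01_in].
  eapply Rle_lt_trans; [apply Rabs_clamp01_sub_le | exact Ht].
Qed.

Lemma bounded_clamp01_ext (f : R -> C) :
  (forall x, continuous (fun t => f (clamp01 t)) x) ->
  exists M, forall x, Cmod (f (clamp01 x)) <= M.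
Proof.
  intros Hc.
  destruct (ex_RInt_ub (V := C_R_NormedModule) (fun t => f (clamp01 t)) 0 1) as [M HM].
  { apply (ex_RInt_continuous (V := C_R_CompleteNormedModule)). intros z _. apply Hc. }
  exists M. intros x. pose proof (clamp01_in x) as Hx.
  rewrite <- (clamp01_id (clamp01 x) Hx), Cmod_norm.
  apply HM. rewrite Rmin_left, Rmax_right by lra. exact Hx.
Qed.

Theorem lemma3p34 (J : R -> Prop) (f : R -> C) :
  compact J ->
  (forall a, J a -> a <> 0) ->
  (* f is continuous on [0,1] (as a function on the subspace [0,1]) *)
  (forall x, 0 <= x <= 1 ->
     filterlim f (within (fun t => 0 <= t <= 1) (locally x)) (locally (f x))) ->
  exists g : R -> R -> C,
    (forall y a, 0 <= y < 1 -> J a -> g y a = psi f y a) /\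
    (* g is continuous on [0,1] x J (subspace topology) *)
    (forall y a, 0 <= y <= 1 -> J a ->
       forall eps : R, 0 < eps -> exists delta : R, 0 < delta /\
         forall y' a', 0 <= y' <= 1 -> J a' ->
           Rabs (y' - y) < delta -> Rabs (a' - a) < delta ->
           Cmod (Cminus (g y' a') (g y a)) < eps).
Proof.
  intros _ Hnz Hf.
  set (w := fun x => f (clamp01 x)).
  pose proof (continuous_clamp01_ext f Hf) as Hw.
  destruct (bounded_clamp01_ext f Hw) as [M HM].
  exists (psi_ext w). split.
  - intros y a hy _. unfold psi_ext. destruct (Rlt_dec y 1) as [_ |]; [| lra].
    unfold psi. f_equal. apply (RInt_ext (V := C_R_CompleteNormedModule)). intros x Hx.
    rewrite Rmin_left, Rmax_right in Hx by lra.
    unfold w. rewrite clamp01_id by lra. reflexivity.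
  - intros y a hy Ja eps he.
    destruct (psi_ext_continuous w M y a Hw HM hy (Hnz a Ja) eps he) as [delta [hdelta Hdelta]].
    exists delta. split; [exact hdelta |]. intros y' a' hy' _. apply Hdelta, hy'.
Qed.
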